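(* For all integers $k\ge 1$ and $n\ge \max(k,2)$, $$G_k(n) > 2^n\left(2^{\binom nk}-n\,2^{\binom{n-1}{k}}\right).$$ More precisely: for each choice of literals $y_i\in\{x_i,\bar x_i\}$ ($i=1,\dots,n$), every nonempty set of $k$-clauses, each built only from literals among $y_1,\dots,y_n$, and such that every $y_i$ occurs in some clause, defines a $k$-SAT function, and distinct pairs (choice of $(y_i)$, such set of clauses) define distinct functions.
   Context: Variables $X_n=\{x_1,\dots,x_n\}$; literals $x_i$ and $\bar x_i$. A $k$-clause is a conjunction of $k$ literals on $k$ distinct variables; a $k$-SAT formula is a disjunction of $k$-clauses, and the Boolean functions so defined are $k$-SAT functions. $G_k(n)$ is the number of $k$-SAT functions of $n$ variables. *)

From HB Require Import structures.
From mathcomp Require Import all_boot all_order all_algebra.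
Set Implicit Arguments. Unset Strict Implicit. Unset Printing Implicit Defensive.

(* A literal over X_n is a pair (i, b) : 'I_n * bool;
   (i, true) stands for x_i and (i, false) for \bar x_i. *)
Definition literal (n : nat) : finType := ('I_n * bool)%type.

Definition assignment (n : nat) : finType := {ffun 'I_n -> bool}.
Definition boolfun (n : nat) : finType := {ffun assignment n -> bool}.

Definition lit_eval (n : nat) (a : assignment n) (l : literal n) : bool :=
  a l.1 == l.2.

Definition is_kclause (n k : nat) (C : {set literal n}) : bool :=
  (#|C| == k) &&
  [forall l1 in C, forall l2 in C, (l1.1 == l2.1) ==> (l1 == l2)].

Definition clause_eval (n : nat) (C : {set literal n}) (a : assignment n) : bool :=
  [forall l in C, lit_eval a l].

Definition is_kformula (n k : nat) (F : {set {set literal n}}) : bool :=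
  [forall C in F, is_kclause k C].

Definition formula_eval (n : nat) (F : {set {set literal n}}) (a : assignment n) : bool :=
  [exists C in F, clause_eval C a].

Definition fun_of_formula (n : nat) (F : {set {set literal n}}) : boolfun n :=
  [ffun a => formula_eval F a].

Definition kSAT_functions (k n : nat) : {set boolfun n} :=
  [set f | [exists F : {set {set literal n}}, is_kformula k F && (f == fun_of_formula F)]].

Definition G (k n : nat) : nat := #|kSAT_functions k n|.

(* The sets of clauses in the "more precisely" part: for the choice of
   literals y_i = (i, y i), S is a nonempty set of k-clauses built only from
   literals among the y_i, in which every y_i occurs. *)
Definition good_clause_set (n k : nat) (y : {ffun 'I_n -> bool})
    (S : {set {set literal n}}) : bool :=
  [&& S != set0,
      [forall C in S, is_kclause k C && [forall l in C, y l.1 == l.2]] &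
      [forall i : 'I_n, exists C in S, (i, y i) \in C]].

From HB Require Import structures.
From mathcomp Require Import all_boot all_order all_algebra.
Import Order.TTheory GRing.Theory Num.Theory.
Set Implicit Arguments. Unset Strict Implicit. Unset Printing Implicit Defensive.

(* For a sign pattern y, a clause all of whose literals are among the y_i is
   determined by its set of variables A, and it is true under the assignment
   agreeing with y exactly on A' iff A is contained in A'.  Evaluating a
   formula of such k-clauses at these assignments for every k-set A' recovers
   its clauses, and doing so for A minus one variable recovers y; so (y, S)
   is determined by the function of S.  For fixed y there are 'C(n, k) such
   clauses, and a set of them that is not good lies in one of the n power
   sets of the 'C(n - 1, k) clauses avoiding some x_i; summing over the 2^n
   patterns y and adding the constant false function gives the bound. *)

Lemma leq_card_bigcup (I T : finType) (F : I -> {set T}) :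
  #|\bigcup_i F i| <= \sum_i #|F i|.
Proof.
elim/big_rec2: _ => [|i A m _ leAm]; first by rewrite cards0.
by apply: leq_trans (leq_card_setU _ _) _; rewrite leq_add2l.
Qed.

Lemma card_setX_dep (T U : finType) (R : T -> U -> bool) :
  #|[set p : T * U | R p.1 p.2]| = \sum_t #|[set u | R t u]|.
Proof.
under eq_bigr => t _ do rewrite -sum1_card big_mkcond /=.
rewrite pair_big -sum1_card big_mkcond /=.
by apply: eq_bigr => p _; rewrite !inE.
Qed.

Section SignedClauses.

Variables (n : nat) (y : {ffun 'I_n -> bool}).
Implicit Types (A B : {set 'I_n}) (C : {set literal n}).

Definition vars (C : {set literal n}) : {set 'I_n} := [set l.1 | l in C].

Definition signed_clause (A : {set 'I_n}) : {set literal n} :=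
  [set ((i, y i) : literal n) | i in A].

Definition yclause (C : {set literal n}) : bool :=
  [forall l in C, y l.1 == l.2].

Definition assign_on (A : {set 'I_n}) : assignment n :=
  [ffun j => if j \in A then y j else ~~ y j].

Lemma signed_lit_inj : injective (fun i : 'I_n => ((i, y i) : literal n)).
Proof. by move=> i j [->]. Qed.

Lemma mem_signed_clause A i :
  (((i, y i) : literal n) \in signed_clause A) = (i \in A).
Proof. exact: (mem_imset _ _ signed_lit_inj). Qed.

Lemma card_signed_clause A : #|signed_clause A| = #|A|.
Proof. exact: (card_imset _ signed_lit_inj). Qed.

Lemma signed_clause_inj : injective signed_clause.
Proof. by move=> A B eqAB; apply/setP => i; rewrite -!mem_signed_clause eqAB. Qed.

Lemma yclause_signed_clause A : yclause (signed_clause A).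
Proof. by apply/forall_inP => l /imsetP [i _ ->]. Qed.

Lemma signed_clause_vars C : yclause C -> signed_clause (vars C) = C.
Proof.
move/forall_inP => yC; apply/setP => -[i b]; apply/idP/idP.
- case/imsetP => j /imsetP [l Cl ->] [-> ->].
  by have /eqP -> := yC _ Cl; case: l Cl.
- move=> Cib; have /eqP /= <- := yC _ Cib.
  by rewrite mem_signed_clause; apply/imsetP; exists (i, b).
Qed.

Lemma vars_signed_clause A : vars (signed_clause A) = A.
Proof.
apply: signed_clause_inj.
by rewrite signed_clause_vars // yclause_signed_clause.
Qed.

Lemma card_vars C : yclause C -> #|vars C| = #|C|.
Proof. by move=> yC; rewrite -card_signed_clause signed_clause_vars. Qed.

Lemma mem_yclause C i :
  yclause C -> (((i, y i) : literal n) \in C) = (i \in vars C).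
Proof. by move=> yC; rewrite -{1}(signed_clause_vars yC) mem_signed_clause. Qed.

Lemma is_kclause_signed_clause k A : #|A| = k -> is_kclause k (signed_clause A).
Proof.
move=> cardA; rewrite /is_kclause card_signed_clause cardA eqxx /=.
apply/forall_inP => _ /imsetP [i _ ->]; apply/forall_inP => _ /imsetP [j _ ->].
by apply/implyP => /= /eqP ->.
Qed.

Lemma eval_assign_on A C :
  yclause C -> clause_eval C (assign_on A) = (vars C \subset A).
Proof.
move/forall_inP => yC; apply/forall_inP/subsetP.
- move=> evC _ /imsetP [l Cl ->]; move: (evC _ Cl) (yC _ Cl).
  rewrite /lit_eval ffunE => /eqP <-; case: (l.1 \in A) => //.
  by case: (y l.1).
- move=> sCA l Cl; rewrite /lit_eval ffunE.
  by rewrite sCA ?yC //; apply/imsetP; exists l.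
Qed.

Definition ykclauses (k : nat) (B : {set 'I_n}) : {set {set literal n}} :=
  [set C | [&& is_kclause k C, yclause C & vars C \subset B]].

Lemma ykclausesE k B :
  ykclauses k B = signed_clause @: [set A : {set 'I_n} | A \subset B & #|A| == k].
Proof.
apply/setP => C; rewrite inE; apply/and3P/imsetP.
- case=> /andP [/eqP cardC _] yC sCB; exists (vars C); last first.
    by rewrite signed_clause_vars.
  by rewrite inE sCB card_vars // cardC eqxx.
- case=> A; rewrite inE => /andP [sAB /eqP cardA] ->.
  by rewrite is_kclause_signed_clause // yclause_signed_clause vars_signed_clause.
Qed.

Lemma card_ykclauses k B : #|ykclauses k B| = 'C(#|B|, k).
Proof. by rewrite ykclausesE card_imset ?cards_draws //; exact: signed_clause_inj. Qed.

End SignedClauses.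

Definition ykformula (n k : nat) (y : {ffun 'I_n -> bool})
    (S : {set {set literal n}}) : bool :=
  [forall C in S, is_kclause k C && yclause y C].

Section SignedFormulas.

Variables (n k : nat).
Implicit Types (y : {ffun 'I_n -> bool}) (A : {set 'I_n}) (S : {set {set literal n}}).

Lemma ykformulaP y S C : ykformula k y S -> C \in S -> #|vars C| = k /\ yclause y C.
Proof.
move=> /forall_inP yS SC; have /andP [/andP [/eqP cardC _] yC] := yS C SC.
by rewrite (card_vars yC).
Qed.

Lemma formula_eval_assign_on y S A :
  ykformula k y S ->
  reflect (exists2 C, C \in S & vars C \subset A) (formula_eval S (assign_on y A)).
Proof.
move=> yS; apply: (iffP exists_inP) => -[C SC evC]; exists C => //;
  by have [_ yC] := ykformulaP yS SC; rewrite eval_assign_on in evC *.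
Qed.

Lemma formula_eval_assign_on_small y S A :
  ykformula k y S -> #|A| < k -> ~~ formula_eval S (assign_on y A).
Proof.
move=> yS ltAk; apply/(formula_eval_assign_on _ yS) => -[C SC /subset_leq_card].
by have [-> _] := ykformulaP yS SC; rewrite leqNgt ltAk.
Qed.

Lemma fun_of_formulaE S a : fun_of_formula S a = formula_eval S a.
Proof. by rewrite ffunE. Qed.

Lemma ykformula_sub y S1 S2 :
  ykformula k y S1 -> ykformula k y S2 ->
  fun_of_formula S1 = fun_of_formula S2 -> S1 \subset S2.
Proof.
move=> yS1 yS2 eqS; apply/subsetP => C S1C.
have [cardC yC] := ykformulaP yS1 S1C.
have : formula_eval S1 (assign_on y (vars C)).
  by apply/(formula_eval_assign_on _ yS1); exists C.
rewrite -fun_of_formulaE eqS fun_of_formulaE.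
case/(formula_eval_assign_on _ yS2) => D S2D sDC.
have [cardD yD] := ykformulaP yS2 S2D.
have eqDC : vars D = vars C by apply/eqP; rewrite eqEcard sDC cardD cardC /=.
by rewrite -(signed_clause_vars yC) -eqDC signed_clause_vars.
Qed.

Lemma ykformula_inj y S1 S2 :
  ykformula k y S1 -> ykformula k y S2 ->
  fun_of_formula S1 = fun_of_formula S2 -> S1 = S2.
Proof.
move=> yS1 yS2 eqS; apply/eqP; rewrite eqEsubset.
by rewrite (ykformula_sub yS1 yS2 eqS) (ykformula_sub yS2 yS1).
Qed.

Lemma assign_onD1 y A i j : j != i -> assign_on y (A :\ i) j = assign_on y A j.
Proof. by move=> neji; rewrite !ffunE in_setD1 neji. Qed.

(* Switching off x_i leaves the y1-formula false, whereas a true y2-clause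
   cannot involve x_i if the signs disagree at i. *)
Lemma ykformula_sign_eq y1 y2 S1 S2 C i :
  ykformula k y1 S1 -> ykformula k y2 S2 ->
  fun_of_formula S1 = fun_of_formula S2 ->
  C \in S1 -> ((i, y1 i) : literal n) \in C -> y1 i = y2 i.
Proof.
move=> yS1 yS2 eqS S1C Ci; apply/eqP/negPn/negP => neq_y.
have [cardC yC] := ykformulaP yS1 S1C.
have Ai : i \in vars C by rewrite -(mem_yclause _ yC).
have : formula_eval S2 (assign_on y1 (vars C)).
  rewrite -fun_of_formulaE -eqS fun_of_formulaE.
  by apply/(formula_eval_assign_on _ yS1); exists C.
case/exists_inP => D S2D /forall_inP evD.
have small : #|vars C :\ i| < k by rewrite -cardC (cardsD1 i (vars C)) Ai.
move: (formula_eval_assign_on_small yS1 small).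
rewrite -fun_of_formulaE eqS fun_of_formulaE => /negP; apply; apply/exists_inP.
exists D => //; apply/forall_inP => l Dl.
have li : l.1 != i.
  apply: contraTneq (evD l Dl) => li.
  have [_ /forall_inP yD] := ykformulaP yS2 S2D.
  by rewrite /lit_eval ffunE -(eqP (yD l Dl)) li Ai.
by rewrite /lit_eval assign_onD1 //; exact: evD.
Qed.

End SignedFormulas.

Section GoodClauseSets.

Variables (n k : nat).
Implicit Types (y : {ffun 'I_n -> bool}) (S : {set {set literal n}}).

Lemma good_clause_setP y S :
  reflect [/\ S != set0, ykformula k y S &
             forall i, exists2 C, C \in S & ((i, y i) : literal n) \in C]
          (good_clause_set k y S).
Proof.
apply: (iffP and3P) => -[S0 yS covS]; split=> //.
- by move=> i; apply/exists_inP; exact: (forallP covS).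
- by apply/forallP => i; apply/exists_inP; exact: covS.
Qed.

Lemma good_clause_set_inj y1 y2 S1 S2 :
  good_clause_set k y1 S1 -> good_clause_set k y2 S2 ->
  fun_of_formula S1 = fun_of_formula S2 -> y1 = y2 /\ S1 = S2.
Proof.
move=> /good_clause_setP [_ yS1 covS1] /good_clause_setP [_ yS2 _] eqS.
have eq_y : y1 = y2.
  apply/ffunP => i; have [C S1C Ci] := covS1 i.
  exact: ykformula_sign_eq yS1 yS2 eqS S1C Ci.
by subst y2; split; last exact: ykformula_inj yS1 yS2 eqS.
Qed.

Lemma ykformula_kSAT y S : ykformula k y S -> fun_of_formula S \in kSAT_functions k n.
Proof.
move=> /forall_inP yS; rewrite inE; apply/existsP; exists S; rewrite eqxx andbT.
by apply/forall_inP => C /yS /andP [].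
Qed.

Lemma good_clause_set_neq_false y S :
  good_clause_set k y S -> fun_of_formula S != fun_of_formula set0.
Proof.
move=> /good_clause_setP [/set0Pn [C SC] yS _]; apply/eqP => /ffunP /(_ y).
rewrite !ffunE; have -> : formula_eval set0 y = false.
  by apply/negbTE/exists_inP => -[D]; rewrite in_set0.
suff -> : formula_eval S y by [].
apply/exists_inP; exists C => //.
by have [_ yC] := ykformulaP yS SC.
Qed.

(* A set of y-signed k-clauses that is not good misses the literal of some
   variable; the empty set misses all of them, which needs n > 0. *)
Lemma powerset_ykclauses_cover y (i0 : 'I_n) :
  powerset (ykclauses y k setT) \subset
    [set S | good_clause_set k y S] :|: \bigcup_i powerset (ykclauses y k [set~ i]).
Proof.
apply/subsetP => S; rewrite powersetE => sSC.
have yS : ykformula k y S.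
  by apply/forall_inP => C /(subsetP sSC); rewrite inE => /and3P [-> ->].
rewrite in_setU in_set; case: (boolP (good_clause_set k y S)) => //= bad.
apply/bigcupP; case: (set_0Vmem S) => [-> | [C0 SC0]].
  by exists i0; rewrite ?powersetE ?sub0set.
have [i Si] : exists i, ~~ [exists C in S, ((i, y i) : literal n) \in C].
  apply/existsP; rewrite -negb_forall; apply: contra bad => covS.
  apply/good_clause_setP; split=> //; first by apply/set0Pn; exists C0.
  by move=> j; apply/exists_inP; exact: (forallP covS).
exists i => //; rewrite powersetE; apply/subsetP => C SC.
have [cardC yC] := ykformulaP yS SC.
have /andP [kC _] := forall_inP yS C SC.
rewrite inE kC yC /=; apply/subsetP => j Cj; rewrite !inE.
apply: contraNneq Si => eq_ji; apply/exists_inP; exists C => //.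
by rewrite (mem_yclause _ yC) -eq_ji.
Qed.

Lemma card_good_clause_sets y (i0 : 'I_n) :
  2 ^ 'C(n, k) <= #|[set S | good_clause_set k y S]| + n * 2 ^ 'C(n.-1, k).
Proof.
have := subset_leq_card (powerset_ykclauses_cover y i0).
rewrite card_powerset card_ykclauses cardsT card_ord => /leq_trans; apply.
apply: leq_trans (leq_card_setU _ _) _; rewrite leq_add2l.
apply: leq_trans (leq_card_bigcup _) _.
rewrite -[n in n * _]card_ord -sum_nat_const; apply: leq_sum => i _.
by rewrite card_powerset card_ykclauses cardsC1 card_ord.
Qed.

End GoodClauseSets.

Definition good_pairs (n k : nat) : {set {ffun 'I_n -> bool} * {set {set literal n}}} :=
  [set p | good_clause_set k p.1 p.2].

Lemma card_good_pairs (n k : nat) (i0 : 'I_n) :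
  2 ^ n * 2 ^ 'C(n, k) <= #|good_pairs n k| + 2 ^ n * (n * 2 ^ 'C(n.-1, k)).
Proof.
have card_signs : #|{ffun 'I_n -> bool}| = 2 ^ n by rewrite card_ffun card_bool card_ord.
rewrite card_setX_dep -card_signs -!sum_nat_const -big_split /=.
by apply: leq_sum => y _; exact: card_good_clause_sets.
Qed.

Lemma card_good_pairs_lt_G (n k : nat) : #|good_pairs n k| < G k n.
Proof.
set Im := [set fun_of_formula p.2 | p in good_pairs n k].
have card_Im : #|Im| = #|good_pairs n k|.
  apply: card_in_imset => -[y1 S1] [y2 S2]; rewrite !inE /= => g1 g2 eqS.
  by have [-> ->] := good_clause_set_inj g1 g2 eqS.
have false_notin_Im : fun_of_formula set0 \notin Im.
  apply/imsetP => -[[y S]]; rewrite inE /= => g /eqP.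
  by rewrite eq_sym (negbTE (good_clause_set_neq_false g)).
have ykformula0 (y : {ffun 'I_n -> bool}) : ykformula k y set0.
  by apply/forall_inP => C; rewrite in_set0.
have sub_kSAT : fun_of_formula set0 |: Im \subset kSAT_functions k n.
  apply/subsetP => f; rewrite in_setU1 => /orP [/eqP -> | /imsetP [[y S] g ->]].
    exact: (ykformula_kSAT (ykformula0 [ffun=> true])).
  by move: g; rewrite inE => /good_clause_setP [_ yS _]; exact: ykformula_kSAT yS.
by have := subset_leq_card sub_kSAT; rewrite cardsU1 false_notin_Im card_Im.
Qed.

Theorem mainTheorem3 (k n : nat) (hk : 1 <= k) (hn : maxn k 2 <= n) :
  ((2 ^ n)%:Z * ((2 ^ 'C(n, k))%:Z - (n * 2 ^ 'C(n.-1, k))%:Z) < (G k n)%:Z)%R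
  /\
  (forall (y : {ffun 'I_n -> bool}) (S : {set {set literal n}}),
      good_clause_set k y S -> fun_of_formula S \in kSAT_functions k n)
  /\
  (forall (y1 y2 : {ffun 'I_n -> bool}) (S1 S2 : {set {set literal n}}),
      good_clause_set k y1 S1 -> good_clause_set k y2 S2 ->
      fun_of_formula S1 = fun_of_formula S2 -> y1 = y2 /\ S1 = S2).
Proof.
have n_gt0 : 0 < n by apply: leq_trans (leq_trans (leq_maxr k 2) hn).
split; last split.
- rewrite mulrBr -!PoszM ltrBlDr -PoszD ltz_nat.
  apply: leq_ltn_trans (card_good_pairs k (Ordinal n_gt0)) _.
  by rewrite ltn_add2r card_good_pairs_lt_G.
- by move=> y S /good_clause_setP [_ yS _]; exact: ykformula_kSAT yS.
- exact: good_clause_set_inj.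
Qed.
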